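(* Let $G$ be a graph, $r\ge1$, $k\in\mathbb{N}$, and let $L_S$ be a subordering of $S\subseteq V(G)$ with free vertices $T=V(G)\setminus S$. Assume there is a full right extension $L'$ of $L_S$ with $\mathrm{wcol}_r(G,L')\le k$. If $u\in T$ satisfies $|\mathrm{Wreach}_r(G,L_S,u)|=k$, then there is a full right extension $\overline{L}$ of $L_S$ in which $u$ is the leftmost vertex of $T$ and $\mathrm{wcol}_r(G,\overline{L})\le k$.
   Context: All graphs are finite, undirected, without loops. A path has length equal to its number of vertices minus one. A subordering $L_S$ is a linear ordering of $S\subseteq V(G)$; $\preceq_{L_S}$ means precedes or equal. For a subordering $L_S$ and $u,v\in V(G)$, $u\in\mathrm{Wreach}_r(G,L_S,v)$ iff either $u=v$, or $u\in S$ and there is a path $P$ of length at most $r$ between $u$ and $v$ with $u\preceq_{L_S} w$ for all $w\in V(P)\cap S$; $\mathrm{wcol}_r(G,L_S)=\max_{v}|\mathrm{Wreach}_r(G,L_S,v)|$. A full right extension of $L_S$ is a linear ordering of $V(G)$ whose restriction to $S$ is $L_S$ and in which every vertex of $S$ precedes every vertex of $V(G)\setminus S$. *)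

From mathcomp Require Import all_boot.
Set Implicit Arguments. Unset Strict Implicit. Unset Printing Implicit Defensive.

(* A subordering L_S of S is a duplicate-free
   sequence L : seq T; S is the set of its elements and u precedes-or-equals w
   iff index u L <= index w L. *)

Section WColDefs.
Variables (T : finType) (e : rel T).

Definition is_path_le (r : nat) (u v : T) (q : seq T) : bool :=
  [&& path e u q, last u q == v, uniq (u :: q) & size q <= r].

Definition min_on_path (L : seq T) (u : T) (q : seq T) : bool :=
  all (fun w => (w \in L) ==> (index u L <= index w L)) (u :: q).

Definition Wreach (r : nat) (L : seq T) (v : T) : {set T} :=
  [set u | (u == v) ||
     ((u \in L) &&
      [exists n : 'I_r.+1, exists t : n.-tuple T,
          is_path_le r u v t && min_on_path L u t])].

Definition wcol (r : nat) (L : seq T) : nat := \max_(v : T) #|Wreach r L v|.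

Definition subordering (L : seq T) : Prop := uniq L.

Definition full_right_extension (L Lf : seq T) : Prop :=
  [/\ uniq Lf, (forall x : T, x \in Lf),
      filter (fun x => x \in L) Lf = L &
      (forall x y : T, x \in L -> y \notin L -> index x Lf < index y Lf)].

End WColDefs.

From mathcomp Require Import all_boot zify.

Set Implicit Arguments. Unset Strict Implicit. Unset Printing Implicit Defensive.

(* Take the new ordering to be L_S, then u, then the other free vertices in
   their L'-order.  Vertices of S still precede all free vertices and the free
   vertices other than u keep their L'-order, so for v <> u a path witnessing
   weak reachability of v from a vertex other than u does so in L' as well.
   For paths starting at u the point is that Wreach_r(G, L_S, u) is contained
   in Wreach_r(G, L', u), so wcol_r(G, L') <= k forces equality: the L'-minimum
   of a short path from u reaches u along the reversed prefix, so if the path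
   avoids S that minimum is u itself.  Finally u, being the first free vertex,
   weakly reaches only vertices of S that it already reached under L_S. *)

Lemma filter_index_le (T : eqType) (a : pred T) (s : seq T) (x y : T) :
  a x -> a y ->
  (index x (filter a s) <= index y (filter a s)) = (index x s <= index y s).
Proof.
move=> ax ay; elim: s => [|z s IH] //=.
have [<-|nzx] := eqVneq x z; first by rewrite ax /= eqxx.
have [yz|nzy] := eqVneq y z; first by subst z; rewrite ay /= eqxx eq_sym (negbTE nzx).
by case: (a z); rewrite /= ?(eq_sym z) ?(negbTE nzx) ?(negbTE nzy).
Qed.

Section FullRightExtension.
Variables (T : finType) (L Lf : seq T).
Hypothesis hLf : full_right_extension L Lf.

Lemma fre_index_leE x y : x \in L -> y \in L ->
  (index x Lf <= index y Lf) = (index x L <= index y L).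
Proof.
case: hLf => _ _ hfilter _ xL yL.
by rewrite -(filter_index_le _ xL yL) hfilter.
Qed.

Lemma fre_index_lt x y : x \in L -> y \notin L -> index x Lf < index y Lf.
Proof. by case: hLf => _ _ _; apply. Qed.

Lemma fre_index_le x y : x \in L -> (y \in L) ==> (index x L <= index y L) ->
  index x Lf <= index y Lf.
Proof.
move=> xL; case yL: (y \in L) => /= le_xy; first by rewrite fre_index_leE.
by rewrite ltnW // fre_index_lt ?yL.
Qed.

End FullRightExtension.

Section WeakReachability.
Variables (T : finType) (e : rel T) (r : nat).

Lemma WreachP (L : seq T) (v w : T) :
  reflect (w = v \/ (w \in L /\ exists t : seq T,
             is_path_le e r w v t && min_on_path L w t))
          (w \in Wreach e r L v).
Proof.
rewrite inE; apply: (iffP orP).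
- case=> [/eqP->|/andP[wL /existsP[n /existsP[t /andP[hp hm]]]]]; first by left.
  by right; split=> //; exists t; rewrite hp hm.
- case=> [->|[wL [t /andP[hp hm]]]]; first by left; rewrite eqxx.
  right; rewrite wL /=.
  have ht : size t < r.+1 by case/and4P: hp.
  by apply/existsP; exists (Ordinal ht); apply/existsP; exists (in_tuple t); rewrite hp hm.
Qed.

Lemma min_on_path_mono (L1 L2 t : seq T) (w : T) :
  {in w :: t, forall y, (y \in L1) ==> (index w L1 <= index y L1) ->
                        (y \in L2) ==> (index w L2 <= index y L2)} ->
  min_on_path L1 w t -> min_on_path L2 w t.
Proof. by move=> H /allP hm; apply/allP => y hy; apply: H (hm y hy). Qed.

Lemma subset_Wreach (L1 L2 : seq T) (v : T) :
  (forall w t, w != v -> w \in L1 -> is_path_le e r w v t ->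
     min_on_path L1 w t -> w \in L2 /\ min_on_path L2 w t) ->
  Wreach e r L1 v \subset Wreach e r L2 v.
Proof.
move=> H; apply/subsetP => w /WreachP [->|[wL1 [t /andP[hp hm]]]].
  by apply/WreachP; left.
have [-> | nwv] := eqVneq w v; first by apply/WreachP; left.
have [wL2 hm2] := H w t nwv wL1 hp hm.
by apply/WreachP; right; split=> //; exists t; rewrite hp hm2.
Qed.

Lemma Wreach_fre (L Lf : seq T) (v : T) : full_right_extension L Lf ->
  Wreach e r L v \subset Wreach e r Lf v.
Proof.
move=> hLf; apply: subset_Wreach => w t _ wL _ hm.
split; first by case: hLf.
apply: min_on_path_mono hm => y _ le_wy.
by rewrite (fre_index_le hLf wL le_wy) implybT.
Qed.

Hypothesis e_sym : symmetric e.

Lemma is_path_le_rev_prefix (u v x : T) (t : seq T) :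
  is_path_le e r u v t -> x \in u :: t ->
  exists2 q, is_path_le e r x u q & {subset x :: q <= u :: t}.
Proof.
move=> hp xt; case/splitPl: xt hp => p1 p2 xlast /and4P[hpath _ huniq hsize].
have xq : x :: rev (belast u p1) = rev (u :: p1).
  by rewrite -xlast [u :: p1]lastI rev_rcons.
exists (rev (belast u p1)); last first.
  by move=> y; rewrite xq mem_rev !inE mem_cat => /orP[->|->]; rewrite ?orbT.
apply/and4P; split.
- rewrite -xlast rev_path (@eq_path _ _ e) => [|a b]; last exact: e_sym.
  by rewrite cat_path in hpath; case/andP: hpath.
- rewrite -xlast; case: p1 {xq hpath huniq hsize xlast} => //= y p1.
  by rewrite rev_cons last_rcons.
- by rewrite xq rev_uniq; rewrite -cat_cons cat_uniq in huniq; case/andP: huniq.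
- by rewrite size_rev size_belast; rewrite size_cat in hsize; lia.
Qed.

Lemma path_min_Wreach (L t : seq T) (u v x : T) :
  is_path_le e r u v t -> x \in u :: t -> x \in L ->
  {in u :: t, forall y, index x L <= index y L} -> x \in Wreach e r L u.
Proof.
move=> hp xt xL xmin; have [q hq sub_q] := is_path_le_rev_prefix hp xt.
apply/WreachP; right; split=> //; exists q; rewrite hq /=.
by apply/allP => y /sub_q yt; rewrite xmin ?implybT.
Qed.

End WeakReachability.

Section FreeFirst.
Variables (T : finType) (LS Lf : seq T) (u : T).

Definition free_first : seq T :=
  LS ++ u :: [seq x <- Lf | (x \notin LS) && (x != u)].

Hypotheses (hLS : uniq LS) (hLf : full_right_extension LS Lf) (uS : u \notin LS).

Lemma mem_free_first x : x \in free_first.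
Proof.
have xLf : x \in Lf by case: hLf.
rewrite mem_cat in_cons mem_filter xLf andbT.
by case: (x \in LS); case: (x == u).
Qed.

Lemma index_free_first_u : index u free_first = size LS.
Proof. by rewrite index_cat (negbTE uS) /= eqxx addn0. Qed.

Lemma index_free_first_free x : x \notin LS -> x != u ->
  index x free_first = (size LS).+1 + index x [seq y <- Lf | (y \notin LS) && (y != u)].
Proof. by move=> xS xu; rewrite index_cat (negbTE xS) /= eq_sym (negbTE xu) addSnnS. Qed.

Lemma free_first_fre : full_right_extension LS free_first.
Proof.
have uniq_Lf : uniq Lf by case: hLf.
split.
- rewrite cat_uniq hLS /= mem_filter eqxx andbF filter_uniq // (negbTE uS) !andbT.
  by apply/hasPn => y; rewrite mem_filter => /andP[/andP[]].
- exact: mem_free_first.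
- have free_notin_S : predI (mem LS) (fun x => (x \notin LS) && (x != u)) =1 pred0.
    by move=> y /=; case: (y \in LS).
  rewrite filter_cat /= (negbTE uS) -filter_predI (eq_filter free_notin_S) filter_pred0.
  by rewrite cats0; apply/all_filterP/allP.
- move=> x y xS yS; rewrite index_cat xS index_cat (negbTE yS).
  by rewrite ltn_addr // index_mem.
Qed.

Lemma free_first_u_le w : w \notin LS -> index u free_first <= index w free_first.
Proof.
move=> wS; have [->//|wu] := eqVneq w u.
by rewrite index_free_first_u index_free_first_free // ltnW // ltn_addr.
Qed.

Lemma free_first_index_le w y : w != u ->
  index w free_first <= index y free_first -> index w Lf <= index y Lf.
Proof.
move=> wu le_wy; case wS: (w \in LS).
  apply: (fre_index_le hLf wS); apply/implyP => yS.
  by rewrite -(fre_index_leE free_first_fre wS yS).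
case yS: (y \in LS).
  by move: le_wy; rewrite leqNgt (fre_index_lt free_first_fre yS) ?wS.
have [yu|yu] := eqVneq y u.
  by move: le_wy; rewrite yu index_free_first_u index_free_first_free ?wS // => ?; lia.
move: le_wy; rewrite !index_free_first_free ?wS ?yS // leq_add2l.
by rewrite filter_index_le //= ?wS ?yS ?wu ?yu.
Qed.

End FreeFirst.

Section Promotion.
Variables (T : finType) (e : rel T) (r k : nat) (LS Lf : seq T) (u : T).
Hypotheses (e_sym : symmetric e) (hLS : uniq LS).
Hypotheses (hLf : full_right_extension LS Lf) (uS : u \notin LS).
Hypotheses (hwcol : wcol e r Lf <= k) (hk : #|Wreach e r LS u| = k).

Local Notation Lbar := (free_first LS Lf u).

Lemma Wreach_fre_u : Wreach e r Lf u = Wreach e r LS u.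
Proof.
apply/eqP; rewrite eq_sym eqEcard Wreach_fre //= hk.
exact: leq_trans (leq_bigmax u) hwcol.
Qed.

Lemma Wreach_free_first_u : Wreach e r Lbar u \subset Wreach e r LS u.
Proof.
apply: subset_Wreach => w t wu _ hp hm.
have ut : u \in w :: t by case/and4P: hp => _ /eqP <- _ _; apply: mem_last.
have le_wu : index w Lbar <= index u Lbar.
  by have := allP hm u ut; rewrite mem_free_first.
have wS : w \in LS.
  apply: contraR wu => wS; apply/eqP/(@index_inj _ w Lbar); rewrite ?mem_free_first //.
  by apply/eqP; rewrite eqn_leq le_wu free_first_u_le.
split=> //; apply: min_on_path_mono hm => y _.
rewrite mem_free_first; case yS: (y \in LS) => //=.
by rewrite (fre_index_leE (free_first_fre hLS hLf uS) wS yS).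
Qed.

Lemma min_on_path_free_first_u v t :
  is_path_le e r u v t -> min_on_path Lbar u t -> min_on_path Lf u t.
Proof.
move=> hp /allP hm.
have t_free y : y \in u :: t -> y \notin LS.
  move=> yt; apply: contraL (hm y yt) => yS.
  by rewrite (mem_free_first _ hLf) implyTb -ltnNge (fre_index_lt (free_first_fre hLS hLf uS)).
have memLf y : y \in Lf by case: hLf.
case: (arg_minnP (fun y => index y Lf) (mem_head u t)) => x xt xmin.
have : x \in Wreach e r Lf u by apply: path_min_Wreach hp xt (memLf x) xmin.
rewrite Wreach_fre_u => /WreachP[xu|[xS _]]; last by have := t_free x xt; rewrite xS.
by apply/allP => y yt; rewrite memLf -xu xmin.
Qed.

Lemma Wreach_free_first v : v != u -> Wreach e r Lbar v \subset Wreach e r Lf v.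
Proof.
move=> vu; apply: subset_Wreach => w t _ _ hp hm.
split; first by case: hLf.
have [wu|wu] := eqVneq w u.
  by rewrite wu in hp hm *; apply: min_on_path_free_first_u hp hm.
apply: min_on_path_mono hm => y _; rewrite (mem_free_first _ hLf) implyTb => le_wy.
by rewrite (free_first_index_le hLS hLf uS wu le_wy) implybT.
Qed.

Lemma wcol_free_first : wcol e r Lbar <= k.
Proof.
apply/bigmax_leqP => v _; have [->|vu] := eqVneq v u.
  by rewrite -hk subset_leq_card // Wreach_free_first_u.
apply: leq_trans (subset_leq_card (Wreach_free_first vu)) _.
exact: leq_trans (leq_bigmax v) hwcol.
Qed.

End Promotion.

Theorem proposition8 (T : finType) (e : rel T)
  (e_sym : symmetric e) (e_irr : irreflexive e)
  (r k : nat) (hr : 1 <= r) (LS : seq T) (hLS : subordering LS) :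
  (exists L' : seq T, full_right_extension LS L' /\ wcol e r L' <= k) ->
  forall u : T, u \notin LS -> #|Wreach e r LS u| = k ->
  exists Lbar : seq T,
    [/\ full_right_extension LS Lbar,
        (forall w : T, w \notin LS -> index u Lbar <= index w Lbar) &
        wcol e r Lbar <= k].
Proof.
move=> [L' [hL' hwcol]] u uS hk.
exists (free_first LS L' u); split.
- exact: free_first_fre.
- exact: free_first_u_le.
- exact: wcol_free_first.
Qed.
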